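(* Let $V$ be a vector space over a field $\mathbb{K}$ and $F$ a bilinear form on $V$. For all integers $k,l\ge0$, $$a_k^F a_l^F=a_l^F a_k^F=\binom{k+l}{k}\,a_{k+l}^F$$ as endomorphisms of $\mathcal{T}(V)$.
   Context: $\mathcal{T}(V)$ is the tensor algebra of $V$. Define $a_0^F=\mathrm{Id}_{\mathcal{T}(V)}$ and, for $k>0$, the linear map $a_k^F$ on $\mathcal{T}(V)$ by $a_k^F(x_1\otimes\cdots\otimes x_p)=0$ if $p<2k$, and for $p\ge2k$ $$a_k^F(x_1\otimes\cdots\otimes x_p)=\sum_{(i_1,j_1,\dots,i_k,j_k)}(-1)^{\sigma}F(x_{i_1},x_{j_1})\cdots F(x_{i_k},x_{j_k})\,X_{(i_1,\dots,j_k)},$$ summing over pairwise distinct indices in $\{1,\dots,p\}$ with $i_l<j_l$ and $i_1<\cdots<i_k$, where $X_{(i_1,\dots,j_k)}$ is $x_1\otimes\cdots\otimes x_p$ with the factors $x_{i_1},x_{j_1},\dots,x_{i_k},x_{j_k}$ omitted, and $(-1)^\sigma$ is the sign of the permutation of $\{1,\dots,p\}$ given by $i_1,j_1,\dots,i_k,j_k$ followed by the remaining indices in increasing order. The binomial coefficient is interpreted as an integer multiple in $\mathbb{K}$. *)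

From HB Require Import structures.
From mathcomp Require Import all_boot all_order all_algebra all_fingroup.
From mathcomp Require Import freeg.
Set Implicit Arguments. Unset Strict Implicit. Unset Printing Implicit Defensive.
Import Order.TTheory GRing.Theory Num.Theory.
Local Open Scope ring_scope.

(* The tensor algebra T(V) = (+)_p V^{(x)p} is realised as the free    *)
(* K-module on words (x_1,...,x_p) : seq V, modulo the K-span of the   *)
(* multilinearity relations.  A word w stands for the pure tensor      *)
(* x_1 (x) ... (x) x_p.                                                *)

Definition freeT (K : fieldType) (V : lmodType K) := {freeg (seq V) / K}.

Definition multilin_gen (K : fieldType) (V : lmodType K) (t : freeT V) : Prop :=
  exists (u v : seq V) (x y : V) (a b : K),
    t = << u ++ (a *: x + b *: y) :: v >> - a *: << u ++ x :: v >>
        - b *: << u ++ y :: v >>.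

Inductive in_span (K : fieldType) (M : lmodType K) (S : M -> Prop) : M -> Prop :=
  | span0 : in_span S 0
  | span_gen t : S t -> in_span S t
  | spanD t1 t2 : in_span S t1 -> in_span S t2 -> in_span S (t1 + t2)
  | spanZ c t : in_span S t -> in_span S (c *: t).

Definition tensor_eq (K : fieldType) (V : lmodType K) (t1 t2 : freeT V) : Prop :=
  in_span (@multilin_gen K V) (t1 - t2).

(* the permutation of 'I_n given by f (identity if f is not injective) *)
Definition perm_of_fun (n : nat) (f : 'I_n -> 'I_n) : {perm 'I_n} :=
  match @injectiveP _ _ f with
  | ReflectT inj => perm inj
  | ReflectF _ => 1%g
  end.

(* The operators a_k^F.  Indices are 0-based: x_i = nth 0 w i.        *)
(* A choice (i_1,j_1,...,i_k,j_k) is a k-tuple of pairs (i_l,j_l).     *)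
Section AkF.
Variables (K : fieldType) (V : lmodType K) (F : V -> V -> K).

Definition chosen (p k : nat) (t : k.-tuple ('I_p * 'I_p)) : seq 'I_p :=
  flatten [seq [:: ij.1; ij.2] | ij <- t].

Definition admissible (p k : nat) (t : k.-tuple ('I_p * 'I_p)) : bool :=
  [&& all (fun ij => (val ij.1 < val ij.2)%N) t,
      sorted ltn [seq val ij.1 | ij <- t] & uniq (chosen t)].

Definition remaining (p k : nat) (t : k.-tuple ('I_p * 'I_p)) : seq 'I_p :=
  [seq m <- enum 'I_p | m \notin chosen t].

Definition sigma (p k : nat) (t : k.-tuple ('I_p * 'I_p)) : {perm 'I_p} :=
  perm_of_fun (fun m : 'I_p => nth m (chosen t ++ remaining t) m).

Definition a_word (k : nat) (w : seq V) : freeT V :=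
  \sum_(t : k.-tuple ('I_(size w) * 'I_(size w)) | admissible t)
     (((-1) ^+ odd_perm (sigma t)) *
      \prod_(ij <- t) F (nth 0 w ij.1) (nth 0 w ij.2))
     *: << [seq nth 0 w (val m) | m : 'I_(size w) <- remaining t] >>.

Definition aF (k : nat) : freeT V -> freeT V := fglift (a_word k).

End AkF.

(* Write L_x for the left multiplication u |-> x u of words and D_x for the
   contraction x_1 ... x_p |-> sum_j (-1)^(j-1) F(x, x_j) x_1 ... x_j^ ... x_p.
   Sorting the admissible pairings of x u according to whether the first
   letter is paired (necessarily as i_1) gives the recursion
     a_(k+1) L_x = L_x a_(k+1) + a_k D_x.
   Together with D_x L_y = F(x, y) - L_y D_x and D_x D_y = - D_y D_x it shows
   that every D_x commutes with every a_l, and an induction on k, l and the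
   length of the word then reduces a_k a_l = C(k+l, k) a_(k+l) to Pascal's
   rule.  The identity already holds for formal combinations of words, before
   quotienting by multilinearity. *)

From HB Require Import structures.
From mathcomp Require Import all_boot all_order all_algebra all_fingroup.
From mathcomp Require Import freeg zify.
Import GRing.Theory.
Set Implicit Arguments. Unset Strict Implicit. Unset Printing Implicit Defensive.

Local Notation lift := fintype.lift.
Local Notation ord_ltn := (relpre (@nat_of_ord _) ltn).

Section FreegLinear.
Local Open Scope ring_scope.
Variables (R : nzRingType) (S : choiceType).

Lemma freegZU (c : R) (s : S) : << c *g s >> = c *: (<< s >> : {freeg S / R}).
Proof. by rewrite [RHS]/GRing.scale /= /fgscale domU1 big_seq1 coeffU eqxx !mulr1. Qed.

Section Lift.
Variables (M : lmodType R) (g : S -> M).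

HB.instance Definition _ :=
  GRing.isZmodMorphism.Build {freeg S / R} M (fglift g) (lift_is_additive g).

Lemma fglift_is_scalable : scalable (fglift g : {freeg S / R} -> M).
Proof.
move=> c D; rewrite [in LHS]/GRing.scale /= /fgscale.
rewrite raddf_sum -[X in c *: fglift g X]freeg_sumE raddf_sum scaler_sumr.
by apply: eq_bigr => s _; rewrite [X in X = _]liftU [X in _ = _ *: X]liftU scalerA.
Qed.

HB.instance Definition _ :=
  GRing.isScalable.Build R {freeg S / R} M *:%R (fglift g) fglift_is_scalable.

Lemma fglift_gen s : fglift g << s >> = g s.
Proof. by rewrite liftU scale1r. Qed.

End Lift.

Lemma linear_freeg_ext (M : lmodType R) (f h : {linear {freeg S / R} -> M}) :
  (forall s, f << s >> = h << s >>) -> f =1 h.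
Proof.
move=> fh D; rewrite -(freeg_sumE D) !raddf_sum; apply: eq_bigr => s _.
rewrite freegZU; transitivity (coeff s D *: f << s >>); first exact: linearZZ.
by rewrite fh; symmetry; exact: linearZZ.
Qed.

End FreegLinear.

Definition pair_map a b (g : 'I_a -> 'I_b) (ij : 'I_a * 'I_a) := (g ij.1, g ij.2).

Lemma pair_map_inj a b (g : 'I_a -> 'I_b) : injective g -> injective (pair_map g).
Proof. by move=> g_inj [i j] [i' j'] [/g_inj-> /g_inj->]. Qed.

Section Choices.
Variables (p k : nat).
Implicit Type t : k.-tuple ('I_p * 'I_p).

Lemma mem_chosen t x : (x \in chosen t) = has (fun ij => (ij.1 == x) || (ij.2 == x)) t.
Proof.
rewrite /chosen; elim: (tval t) => //= ij s IH.
by rewrite !in_cons IH orbA ![x == _]eq_sym.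
Qed.

Lemma uniq_chosen t : admissible t -> uniq (chosen t).
Proof. by case/and3P. Qed.

Lemma mem_remaining t m : (m \in remaining t) = (m \notin chosen t).
Proof. by rewrite mem_filter mem_enum andbT. Qed.

Lemma sorted_remaining t : sorted ord_ltn (remaining t).
Proof.
rewrite (sorted_filter (relpre_trans ltn_trans)) //.
by rewrite -sorted_map val_enum_ord iota_ltn_sorted.
Qed.

Lemma sorted_eq_remaining t (r : seq 'I_p) :
  sorted ord_ltn r -> r =i [predC chosen t] -> r = remaining t.
Proof.
move=> r_sorted r_mem.
apply: (irr_sorted_eq (relpre_trans ltn_trans) _ r_sorted (sorted_remaining t)).
  by move=> m; exact: ltnn.
by move=> m; rewrite r_mem mem_remaining.
Qed.

Lemma size_chosen t : size (chosen t) = k.*2.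
Proof.
rewrite -[in RHS](size_tuple t) /chosen.
by elim: (tval t) => //= ij s ->; rewrite doubleS.
Qed.

Lemma perm_chosen_remaining t :
  uniq (chosen t) -> perm_eq (chosen t ++ remaining t) (enum 'I_p).
Proof.
move=> chosen_uniq; apply: uniq_perm; last 1 first.
- by move=> m; rewrite mem_cat mem_remaining mem_enum orbN.
- rewrite cat_uniq chosen_uniq filter_uniq ?enum_uniq //= andbT.
  by apply/hasPn => m; rewrite mem_remaining.
- exact: enum_uniq.
Qed.

Lemma size_chosen_remaining t : uniq (chosen t) -> size (chosen t ++ remaining t) = p.
Proof. by move/perm_chosen_remaining/perm_size->; rewrite size_enum_ord. Qed.

Lemma sigmaE t : uniq (chosen t) -> forall m, sigma t m = nth m (chosen t ++ remaining t) m.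
Proof.
move=> chosen_uniq; set s := chosen t ++ remaining t.
have size_s : size s = p by exact: size_chosen_remaining.
have s_uniq : uniq s by rewrite (perm_uniq (perm_chosen_remaining chosen_uniq)) enum_uniq.
have nth_inj : injective (fun m : 'I_p => nth m s m).
  move=> m m' /=; rewrite (set_nth_default m m') ?size_s // => /eqP.
  by rewrite nth_uniq ?size_s // => /eqP/val_inj.
by move=> m; rewrite /sigma /perm_of_fun; case: injectiveP => // f_inj; rewrite permE.
Qed.

Lemma double_leq_chosen t : uniq (chosen t) -> (k.*2 <= p)%N.
Proof.
by move/size_chosen_remaining <-; rewrite size_cat size_chosen leq_addr.
Qed.

End Choices.

Lemma head_pair_neq p k (t : k.+1.-tuple ('I_p * 'I_p)) :
  admissible t -> (thead t).2 != (thead t).1.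
Proof.
case/tupleP: t => -[i j] t; rewrite theadE => /and3P[/= /andP[lt_ij _] _ _].
by rewrite -val_eqE /= gtn_eqF.
Qed.

Lemma head_le_chosen p k (t : k.+1.-tuple ('I_p * 'I_p)) x :
  admissible t -> x \in chosen t -> ((thead t).1 <= x)%N.
Proof.
case/tupleP: t => -[i j] t; rewrite theadE => /and3P[/= /andP[lt_ij lt_t] sorted_t _].
rewrite path_sortedE in sorted_t; last exact: ltn_trans.
case/andP: sorted_t => /allP i_min _.
rewrite mem_chosen /= => /orP[/orP[]/eqP<- //|/hasP[[i' j'] ij_t]]; first exact: ltnW.
have lt_ii' : (i < i')%N by apply: i_min; exact: (map_f _ ij_t).
case/orP=> /eqP<-; first exact: ltnW.
by apply/ltnW/(ltn_trans lt_ii'); exact: (allP lt_t _ ij_t).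
Qed.

Section Relabeling.
Variables (a b k : nat) (g : 'I_a -> 'I_b).
Implicit Type t : k.-tuple ('I_a * 'I_a).

Lemma chosen_map t : chosen (map_tuple (pair_map g) t) = map g (chosen t).
Proof. by rewrite /chosen /=; elim: (tval t) => //= ij s ->. Qed.

Lemma map_pair_map_codom (t' : k.-tuple ('I_b * 'I_b)) :
  {subset chosen t' <= codom g} -> exists t, t' = map_tuple (pair_map g) t.
Proof.
elim: k t' => [|n IH] t' sub_g; first by exists [tuple]; rewrite [t']tuple0; apply: val_inj.
case/tupleP: t' sub_g => -[i j] t' sub_g.
have /codomP[i' ->] : i \in codom g by apply: sub_g; rewrite mem_chosen /= eqxx.
have /codomP[j' ->] : j \in codom g by apply: sub_g; rewrite mem_chosen /= eqxx orbT.
have [s ->] : exists s, t' = map_tuple (pair_map g) s.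
  by apply: IH => x x_t'; apply: sub_g; rewrite mem_chosen /= -mem_chosen x_t' orbT.
by exists [tuple of (i', j') :: s]; apply: val_inj.
Qed.

Hypothesis g_mono : {mono g : x y / (x < y)%N}.

Lemma mono_ord_inj : injective g.
Proof.
by move=> x y gxy; apply: val_inj; case: (ltngtP x y) => //; rewrite -g_mono gxy ltnn.
Qed.

Lemma admissible_map t : admissible (map_tuple (pair_map g) t) = admissible t.
Proof.
rewrite /admissible chosen_map (map_inj_uniq mono_ord_inj) /= all_map -!map_comp.
rewrite !sorted_map; congr [&& _, _ & _].
  by apply: eq_all => ij /=; exact: g_mono.
by apply: eq_sorted => x y /=; exact: g_mono.
Qed.

End Relabeling.

Lemma nth_cat_cons_bump (T U : Type) (x0 : T) (y0 y : U) (f : T -> U) (s1 s2 : seq T) i :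
  (i < size s1 + size s2)%N ->
  nth y0 (map f s1 ++ y :: map f s2) (bump (size s1) i) = f (nth x0 (s1 ++ s2) i).
Proof.
move=> lt_i; rewrite /bump !nth_cat size_map.
case: (ltnP i (size s1)) => [lt1 | ge1].
  by rewrite add0n lt1 (nth_map x0).
rewrite add1n ltnNge (leqW ge1) /= subSn //= (nth_map x0) //.
by rewrite ltn_subLR.
Qed.

Section ShiftedPairs.
Variables (p k : nat).
Implicit Type t : k.-tuple ('I_p * 'I_p).

Definition shift_pairs t := map_tuple (pair_map (lift (@ord0 p))) t.

Lemma lift0_mono : {mono lift (@ord0 p) : x y / (x < y)%N}.
Proof. by move=> x y; rewrite !lift0 ltnS. Qed.

Lemma remaining_shift t : remaining (shift_pairs t) = ord0 :: map (lift ord0) (remaining t).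
Proof.
have lift0_neq0 m : (ord0 \in map (lift (@ord0 p)) m) = false.
  by apply/mapP => -[x _ /eqP]; rewrite (negbTE (neq_lift _ _)).
rewrite /remaining chosen_map enum_ordSl /= lift0_neq0 filter_map.
congr (_ :: map _ _); apply: eq_filter => m /=.
by rewrite (mem_map (@lift_inj _ ord0)).
Qed.

(* The unpaired index 0 of a shifted choice sits at position 2k. *)
Lemma sigma_shift t : uniq (chosen t) ->
  sigma (shift_pairs t) = lift_perm (inord k.*2) ord0 (sigma t).
Proof.
move=> chosen_uniq.
have shift_uniq : uniq (chosen (shift_pairs t)).
  by rewrite chosen_map (map_inj_uniq (@lift_inj _ ord0)).
have i0E : @inord p k.*2 = k.*2 :> nat.
  by rewrite inordK // ltnS (double_leq_chosen chosen_uniq).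
apply/permP => m; rewrite sigmaE // remaining_shift chosen_map.
case: (unliftP (inord k.*2) m) => [m'|] ->; apply: val_inj.
  rewrite lift_perm_lift sigmaE // /= i0E -(size_chosen t) (nth_cat_cons_bump m') //.
  by rewrite -size_cat size_chosen_remaining.
by rewrite lift_perm_id i0E nth_cat size_map size_chosen ltnn subnn.
Qed.

Lemma odd_sigma_shift t : uniq (chosen t) -> odd_perm (sigma (shift_pairs t)) = odd_perm (sigma t).
Proof.
move=> chosen_uniq; rewrite sigma_shift // odd_lift_perm inordK ?odd_double //.
by rewrite ltnS (double_leq_chosen chosen_uniq).
Qed.

Lemma shift_pairs_inj : injective shift_pairs.
Proof.
by move=> t1 t2 /(congr1 val)/(inj_map (pair_map_inj (@lift_inj _ ord0)))/val_inj.
Qed.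

End ShiftedPairs.

Section PairsThroughZero.
Variables (q k : nat) (j : 'I_q.+1).
Implicit Type t : k.-tuple ('I_q * 'I_q).

Definition skip2 (i : 'I_q) : 'I_q.+2 := lift ord0 (lift j i).

Definition add_pair0 t : k.+1.-tuple ('I_q.+2 * 'I_q.+2) :=
  [tuple of (ord0, lift ord0 j) :: map_tuple (pair_map skip2) t].

Lemma skip2_mono : {mono skip2 : x y / (x < y)%N}.
Proof. by move=> x y; rewrite !lift0 ltnS /= !ltnNge leq_bump2. Qed.

Lemma skip2_neq0 x : (skip2 x == ord0) = false.
Proof. by rewrite eq_sym (negbTE (neq_lift _ _)). Qed.

Lemma skip2_neq_pair0 x : (skip2 x == lift ord0 j) = false.
Proof. by rewrite (inj_eq (@lift_inj _ ord0)) eq_sym (negbTE (neq_lift _ _)). Qed.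

Lemma codom_skip2 x : x != ord0 -> x != lift ord0 j -> x \in codom skip2.
Proof.
case: (unliftP ord0 x) => [x1|] ->; rewrite ?eqxx // => _.
case: (unliftP j x1) => [x2|] ->; rewrite ?eqxx // => _.
by apply/codomP; exists x2.
Qed.

Lemma chosen_add_pair0 t :
  chosen (add_pair0 t) = ord0 :: lift ord0 j :: map skip2 (chosen t).
Proof. by rewrite -chosen_map. Qed.

Lemma uniq_chosen_add_pair0 t : uniq (chosen (add_pair0 t)) = uniq (chosen t).
Proof.
have skip2_notin x s : (forall y, (skip2 y == x) = false) -> (x \in map skip2 s) = false.
  by move=> neq_x; apply/mapP => -[y _ /eqP]; rewrite eq_sym neq_x.
rewrite chosen_add_pair0 /= !in_cons (negbTE (neq_lift _ _)).
rewrite !skip2_notin ?(map_inj_uniq (mono_ord_inj skip2_mono)) //; exact: skip2_neq_pair0.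
Qed.

Lemma admissible_add_pair0 t : admissible (add_pair0 t) = admissible t.
Proof.
rewrite -(admissible_map skip2_mono) /admissible uniq_chosen_add_pair0 chosen_map.
rewrite [all _ _]/= [sorted _ _]/= path_sortedE; last exact: ltn_trans.
rewrite (_ : all (ltn 0) _ = true) ?(map_inj_uniq (mono_ord_inj skip2_mono)) //.
by apply/allP => i /mapP[? /mapP[x _ ->] ->].
Qed.

Lemma remaining_add_pair0 t : remaining (add_pair0 t) = map skip2 (remaining t).
Proof.
apply/esym/sorted_eq_remaining.
  by rewrite (mono_sorted skip2_mono) sorted_remaining.
move=> m; rewrite [in RHS]inE chosen_add_pair0 !in_cons.
case: (eqVneq m ord0) => [->|m_neq0] /=.
  by apply/mapP => -[x _ /eqP]; rewrite eq_sym skip2_neq0.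
case: (eqVneq m (lift ord0 j)) => [->|m_neqj] /=.
  by apply/mapP => -[x _ /eqP]; rewrite eq_sym skip2_neq_pair0.
have /codomP[x ->] := codom_skip2 m_neq0 m_neqj.
by rewrite !(mem_map (mono_ord_inj skip2_mono)) mem_remaining.
Qed.

Lemma sigma_add_pair0 t : uniq (chosen t) ->
  sigma (add_pair0 t) = lift_perm ord0 ord0 (lift_perm ord0 j (sigma t)).
Proof.
move=> chosen_uniq.
have add_uniq : uniq (chosen (add_pair0 t)) by rewrite uniq_chosen_add_pair0.
apply/permP => m; rewrite sigmaE // remaining_add_pair0 chosen_add_pair0 /= -map_cat.
case: (unliftP ord0 m) => [m1|] ->; last by rewrite lift_perm_id.
rewrite lift_perm_lift; case: (unliftP ord0 m1) => [m2|] ->; last first.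
  by rewrite lift_perm_id; apply: val_inj; rewrite !lift0.
rewrite lift_perm_lift sigmaE //; apply: val_inj; rewrite !lift0 /=.
by rewrite (nth_map m2) // size_chosen_remaining.
Qed.

Lemma odd_sigma_add_pair0 t : uniq (chosen t) ->
  odd_perm (sigma (add_pair0 t)) = odd j (+) odd_perm (sigma t).
Proof. by move=> chosen_uniq; rewrite sigma_add_pair0 // !odd_lift_perm. Qed.

Lemma add_pair0_inj : injective add_pair0.
Proof.
move=> t1 t2 /(congr1 val) [].
by move/(inj_map (pair_map_inj (mono_ord_inj skip2_mono)))/val_inj.
Qed.

End PairsThroughZero.


Lemma admissible_head_neq0 p k :
  [set t : k.+1.-tuple ('I_p.+1 * 'I_p.+1) | admissible t & (thead t).1 != ord0]
  = @shift_pairs p k.+1 @: [set t : k.+1.-tuple ('I_p * 'I_p) | admissible t].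
Proof.
apply/setP => t; rewrite inE; apply/andP/imsetP => [[t_adm head_neq0] | [t' t'_adm ->]].
  have [t' t_eq] : exists t', t = shift_pairs t'.
    apply: map_pair_map_codom => x x_t.
    case: (unliftP ord0 x) => [x'|] x_eq; first by apply/codomP; exists x'.
    have := head_le_chosen t_adm x_t; rewrite x_eq leqn0 => /eqP head0.
    by case/eqP: head_neq0; apply: val_inj.
  by exists t' => //; rewrite inE -(admissible_map (@lift0_mono p)); rewrite t_eq in t_adm.
rewrite inE in t'_adm; split; first by rewrite admissible_map // lift0_mono.
by case/tupleP: t' {t'_adm} => ij t'; rewrite /thead (tnth_nth (ord0, ord0)).
Qed.

Lemma admissible_head_pair0 q k (j : 'I_q.+1) :
  [set t : k.+1.-tuple ('I_q.+2 * 'I_q.+2) | admissible t & thead t == (ord0, lift ord0 j)]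
  = add_pair0 j @: [set t : k.-tuple ('I_q * 'I_q) | admissible t].
Proof.
apply/setP => t; rewrite inE; apply/andP/imsetP => [[] | [t' t'_adm ->]]; last first.
  by rewrite inE in t'_adm; rewrite admissible_add_pair0 t'_adm theadE.
case/tupleP: t => ij t; rewrite theadE => t_adm /eqP ij_eq; subst ij.
have t_uniq := uniq_chosen t_adm; rewrite [chosen _]/= !cons_uniq !in_cons in t_uniq.
case/and3P: t_uniq => /norP[_ notin0] notinj _.
have [t' t_eq] : exists t', t = map_tuple (pair_map (skip2 j)) t'.
  apply: map_pair_map_codom => x x_t; apply: codom_skip2.
    by apply: contraNneq notin0 => <-.
  by apply: contraNneq notinj => <-.
exists t'; last by apply: val_inj; rewrite /= t_eq.
by rewrite inE -(admissible_add_pair0 j) /add_pair0 -t_eq.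
Qed.

Definition rem_at T (j : nat) (s : seq T) := take j s ++ drop j.+1 s.

Lemma size_rem_at T j (s : seq T) : j < size s -> size (rem_at j s) = (size s).-1.
Proof. by move=> lt_j; rewrite size_cat size_take lt_j size_drop; lia. Qed.

Lemma nth_rem_at T (x0 : T) j s i : j < size s -> nth x0 (rem_at j s) i = nth x0 s (bump j i).
Proof.
move=> lt_j; rewrite nth_cat size_take lt_j /bump.
case: (ltnP i j) => [lt_ij | le_ji]; first by rewrite nth_take.
by rewrite nth_drop add1n; congr nth; lia.
Qed.

Local Open Scope ring_scope.

Section Contractions.
Variables (K : fieldType) (V : lmodType K) (F : V -> V -> K).

Definition tensorl (x : V) : freeT V -> freeT V := fglift (fun u => << x :: u >>).

HB.instance Definition _ x := GRing.Linear.copy (tensorl x) (fglift _).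
HB.instance Definition _ k := GRing.Linear.copy (aF F k) (fglift _).

Lemma tensorl_gen x u : tensorl x << u >> = << x :: u >>.
Proof. exact: fglift_gen. Qed.

(* A word is given by its letter function [f] on [0, p), so that deleting a
   letter is a reindexing (see [nth_rem_at]) rather than a cast between
   ordinal types; [a_word F k w] is [a_fun (size w) k (nth 0 w)]. *)
Definition pairing_term p k (f : nat -> V) (t : k.-tuple ('I_p * 'I_p)) : freeT V :=
  ((-1) ^+ odd_perm (sigma t) * \prod_(ij <- t) F (f ij.1) (f ij.2))
    *: << [seq f (val m) | m <- remaining t] >>.

Definition a_fun p k (f : nat -> V) : freeT V :=
  \sum_(t : k.-tuple ('I_p * 'I_p) | admissible t) pairing_term f t.

Lemma a_word_fun k w : a_word F k w = a_fun (size w) k (nth 0 w).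
Proof. by []. Qed.

Lemma eq_a_fun p k f g : f =1 g -> a_fun p k f = a_fun p k g.
Proof.
move=> fg; apply: eq_bigr => t _; rewrite /pairing_term.
by under eq_bigr do rewrite !fg; under eq_map do rewrite fg.
Qed.

Lemma pairing_term_shift p k f (t : k.-tuple ('I_p * 'I_p)) : admissible t ->
  pairing_term f (shift_pairs t) = tensorl (f 0%N) (pairing_term (fun i => f i.+1) t).
Proof.
move=> t_adm; rewrite /pairing_term odd_sigma_shift ?uniq_chosen // big_map.
by rewrite remaining_shift linearZZ /= tensorl_gen -map_comp.
Qed.

Lemma pairing_term_add_pair0 q k f (j : 'I_q.+1) (t : k.-tuple ('I_q * 'I_q)) :
  admissible t ->
  pairing_term f (add_pair0 j t) =
  ((-1) ^+ j * F (f 0%N) (f j.+1)) *: pairing_term (fun i => f (bump j i).+1) t.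
Proof.
move=> t_adm; rewrite /pairing_term odd_sigma_add_pair0 ?uniq_chosen // big_cons big_map.
rewrite remaining_add_pair0 -map_comp scalerA signr_addb signr_odd.
by congr (_ *: _); rewrite !mulrA; congr (_ * _); rewrite mulrAC.
Qed.

Lemma sum_head_neq0 p k f :
  \sum_(t : k.+1.-tuple ('I_p.+1 * 'I_p.+1) | admissible t && ((thead t).1 != ord0))
    pairing_term f t = tensorl (f 0%N) (a_fun p k.+1 (fun i => f i.+1)).
Proof.
rewrite (eq_bigl (mem [set t | admissible t & (thead t).1 != ord0])); last first.
  by move=> t; rewrite !inE.
rewrite admissible_head_neq0 big_imset; last exact: in2W (@shift_pairs_inj p k.+1).
rewrite raddf_sum; apply: eq_big => [t | t]; first by rewrite inE.
by rewrite inE => t_adm; rewrite pairing_term_shift.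
Qed.

Lemma sum_head_pair0 q k f (j : 'I_q.+1) :
  \sum_(t : k.+1.-tuple ('I_q.+2 * 'I_q.+2) | admissible t && (thead t == (ord0, lift ord0 j)))
    pairing_term f t =
  ((-1) ^+ j * F (f 0%N) (f j.+1)) *: a_fun q k (fun i => f (bump j i).+1).
Proof.
rewrite (eq_bigl (mem [set t | admissible t & thead t == (ord0, lift ord0 j)])); last first.
  by move=> t; rewrite !inE.
rewrite admissible_head_pair0 big_imset; last exact: in2W (@add_pair0_inj q k j).
rewrite scaler_sumr; apply: eq_big => [t | t]; first by rewrite inE.
by rewrite inE => t_adm; rewrite pairing_term_add_pair0.
Qed.

(* Index 0 is either unpaired or it is i_1, paired with some j_1 = j + 1. *)
Lemma a_fun_cons p k f :
  a_fun p.+1 k.+1 f = tensorl (f 0%N) (a_fun p k.+1 (fun i => f i.+1)) +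
    \sum_(j < p) ((-1) ^+ j * F (f 0%N) (f j.+1)) *: a_fun p.-1 k (fun i => f (bump j i).+1).
Proof.
rewrite /a_fun (bigID (fun t => (thead t).1 == ord0)) /= addrC sum_head_neq0; congr (_ + _).
case: p f => [|q] f.
  rewrite big_ord0 big_pred0 // => t; apply/negP => /andP[/head_pair_neq].
  by rewrite !ord1.
rewrite (partition_big (fun t => (thead t).2) (fun j => j != ord0)) /=; last first.
  by move=> t /andP[/head_pair_neq neq /eqP eq0]; rewrite -eq0.
rewrite big_mkcond big_ord_recl eqxx /= add0r; apply: eq_bigr => j _.
rewrite -sum_head_pair0; apply: eq_bigl => t.
by case: (thead t) => i1 i2; rewrite xpair_eqE andbA.
Qed.

Definition contract_word (x : V) (u : seq V) : freeT V :=
  \sum_(j < size u) ((-1) ^+ j * F x (nth 0 u j)) *: << rem_at j u >>.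

Definition contract x := fglift (contract_word x).

HB.instance Definition _ x := GRing.Linear.copy (contract x) (fglift _).

Lemma contract_gen x u : contract x << u >> = contract_word x u.
Proof. exact: fglift_gen. Qed.

Lemma aF_gen k u : aF F k << u >> = a_word F k u.
Proof. exact: fglift_gen. Qed.

Lemma a_word0 w : a_word F 0 w = << w >>.
Proof.
rewrite a_word_fun /a_fun (big_pred1 [tuple]) => [|t]; last by rewrite [t]tuple0.
have sigma_nil : sigma ([tuple] : 0.-tuple ('I_(size w) * 'I_(size w))) = 1%g.
  by apply/permP => m; rewrite sigmaE // perm1 /= /remaining filter_predT nth_ord_enum.
rewrite /pairing_term sigma_nil odd_perm1 big_nil mulr1 scale1r /remaining filter_predT.
by rewrite (map_comp (nth 0 w) val) val_enum_ord -/(mkseq _ _) mkseq_nth.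
Qed.

Lemma a_word_nil k : a_word F k.+1 [::] = 0.
Proof. by rewrite a_word_fun /a_fun big_pred0 // => -[[|[[]]]]. Qed.

Lemma a_word_cons k x u :
  a_word F k.+1 (x :: u) = tensorl x (a_word F k.+1 u) + aF F k (contract_word x u).
Proof.
rewrite !a_word_fun a_fun_cons; congr (_ + _).
rewrite raddf_sum; apply: eq_bigr => j _ /=.
rewrite linearZZ /= aF_gen a_word_fun size_rem_at //; congr (_ *: _).
by apply: eq_a_fun => i; rewrite nth_rem_at.
Qed.

Lemma contract_word_nil x : contract_word x [::] = 0.
Proof. exact: big_ord0. Qed.

Lemma contract_word_cons x y u :
  contract_word x (y :: u) = F x y *: << u >> - tensorl y (contract_word x u).
Proof.
rewrite /contract_word big_ord_recl /= expr0 mul1r /rem_at /= drop0.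
congr (_ + _); rewrite raddf_sum -sumrN; apply: eq_bigr => j _ /=.
by rewrite linearZZ /= tensorl_gen /bump leq0n add1n add0n exprS mulN1r mulNr scaleNr.
Qed.

Lemma aF0 T : aF F 0 T = T.
Proof.
move: T; apply: (linear_freeg_ext (f := aF F 0) (h := idfun)) => u /=.
by rewrite aF_gen a_word0.
Qed.

Lemma aF_nil k : aF F k.+1 << [::] >> = 0.
Proof. by rewrite aF_gen a_word_nil. Qed.

Lemma aF_tensorl k x T :
  aF F k.+1 (tensorl x T) = tensorl x (aF F k.+1 T) + aF F k (contract x T).
Proof.
move: T; apply: (linear_freeg_ext (f := aF F k.+1 \o tensorl x)
  (h := (tensorl x \o aF F k.+1) \+ (aF F k \o contract x))) => u /=.
by rewrite tensorl_gen !aF_gen contract_gen a_word_cons.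
Qed.

Lemma contract_tensorl x y T :
  contract x (tensorl y T) = F x y *: T - tensorl y (contract x T).
Proof.
move: T; apply: (linear_freeg_ext (f := contract x \o tensorl y)
  (h := (F x y \*: idfun) \- (tensorl y \o contract x))) => u /=.
by rewrite tensorl_gen !contract_gen contract_word_cons.
Qed.

Lemma contract_anticomm x y T : contract x (contract y T) = - contract y (contract x T).
Proof.
move: T; apply: (linear_freeg_ext (f := contract x \o contract y)
  (h := \- (contract y \o contract x))) => u /=.
elim: u => [|z u IHu]; first by rewrite !contract_gen !contract_word_nil !raddf0.
rewrite -tensorl_gen !contract_tensorl raddfB [in RHS]raddfB /= !linearZZ /=.
rewrite !contract_tensorl IHu raddfN /=.
by rewrite !opprB addrA.
Qed.

Lemma contract_aF x l T : contract x (aF F l T) = aF F l (contract x T).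
Proof.
elim: l T => [|l IHl] T; first by rewrite !aF0.
move: T; apply: (linear_freeg_ext (f := contract x \o aF F l.+1)
  (h := aF F l.+1 \o contract x)) => u /=.
elim: u => [|y u IHu]; first by rewrite aF_nil contract_gen contract_word_nil !raddf0.
rewrite -tensorl_gen aF_tensorl !contract_tensorl raddfD /= contract_tensorl IHu IHl.
rewrite raddfB /= linearZZ /= aF_tensorl contract_anticomm raddfN /=.
by rewrite opprD addrA.
Qed.

Lemma aF_comp k l T : aF F k (aF F l T) = 'C(k + l, k)%:R *: aF F (k + l) T.
Proof.
elim: k l T => [|k IHk] l T; first by rewrite aF0 add0n bin0 scale1r.
elim: l T => [|l IHl] T; first by rewrite aF0 addn0 binn scale1r.
move: T; apply: (linear_freeg_ext (f := aF F k.+1 \o aF F l.+1)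
  (h := 'C(k.+1 + l.+1, k.+1)%:R \*: aF F (k.+1 + l.+1))) => u /=.
rewrite !addSn !addnS.
elim: u => [|y u IHu]; first by rewrite !aF_nil raddf0 scaler0.
rewrite -tensorl_gen !aF_tensorl raddfD /= aF_tensorl contract_aF IHu IHk IHl !addnS !addSn.
by rewrite linearZZ /= scalerDr -addrA -scalerDl -natrD [('C(_, k) + _)%N]addnC -binS.
Qed.

End Contractions.

Theorem mainTheorem6 (K : fieldType) (V : lmodType K) (F : V -> V -> K)
  (F_linl : forall (a : K) (x y z : V), F (a *: x + y) z = a * F x z + F y z)
  (F_linr : forall (a : K) (x y z : V), F x (a *: y + z) = a * F x y + F x z)
  (k l : nat) :
  forall t : freeT V,
    tensor_eq (aF F k (aF F l t)) ('C(k + l, k)%:R *: aF F (k + l) t) /\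
    tensor_eq (aF F l (aF F k t)) ('C(k + l, k)%:R *: aF F (k + l) t).
Proof.
move=> t; have binC : 'C(k + l, l) = 'C(k + l, k) by rewrite -bin_sub ?leq_addl // addnK.
by rewrite /tensor_eq !aF_comp [(l + k)%N]addnC binC subrr; split; exact: span0.
Qed.
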